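(* Let $G$ be a simple graph on $n$ vertices and let $k$ be an integer with $2 \le k \le n-2$. Then the $k$-token graph $F_k(G)$ is regular if and only if one of the following holds: (1) $G$ is isomorphic to the complete graph $K_n$; (2) $G$ is isomorphic to the empty graph $\overline{K_n}$ (the graph on $n$ vertices with no edges); (3) $G$ is isomorphic to the complete bipartite graph (star) $K_{1,n-1}$ and $k=n/2$; (4) $G$ is isomorphic to the complement $\overline{K_{1,n-1}}$ of the star and $k=n/2$.
   Context: For a simple graph $G=(V,E)$ on $n$ vertices and an integer $1\le k<n$, the $k$-token graph $F_k(G)$ is the graph whose vertices are all $k$-element subsets of $V$, two such subsets $A,B$ being adjacent whenever their symmetric difference $A\triangle B$ is a pair $\{a,b\}$ with $a$ adjacent to $b$ in $G$. *)

(* A simple graph is a symmetric irreflexive relation e on a finType T. *)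
From mathcomp Require Import all_boot.
Set Implicit Arguments. Unset Strict Implicit. Unset Printing Implicit Defensive.

Definition token_adj (T : finType) (e : rel T) (k : nat) (A B : {set T}) : bool :=
  [&& #|A| == k, #|B| == k &
   [exists a : T, exists b : T,
      e a b && ((A :\: B) :|: (B :\: A) == [set a; b])]].

Definition token_deg (T : finType) (e : rel T) (k : nat) (A : {set T}) : nat :=
  #|[set B : {set T} | token_adj e k A B]|.

Definition token_regular (T : finType) (e : rel T) (k : nat) : Prop :=
  exists d : nat, forall A : {set T}, #|A| = k -> token_deg e k A = d.

Definition graph_iso (T : finType) (e : rel T) (n : nat) (r : rel 'I_n) : Prop :=
  exists f : T -> 'I_n, bijective f /\ forall x y, e x y = r (f x) (f y).

Definition complete_rel (n : nat) : rel 'I_n := fun i j => i != j.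
Definition empty_rel (n : nat) : rel 'I_n := fun _ _ => false.
Definition star_rel (n : nat) : rel 'I_n :=
  fun i j => (i != j) && ((val i == 0) || (val j == 0)).
Definition costar_rel (n : nat) : rel 'I_n :=
  fun i j => (i != j) && ~~ ((val i == 0) || (val j == 0)).
Arguments complete_rel n : clear implicits.
Arguments empty_rel n : clear implicits.
Arguments star_rel n : clear implicits.
Arguments costar_rel n : clear implicits.

From mathcomp Require Import all_boot fingroup perm zify.
Set Implicit Arguments. Unset Strict Implicit. Unset Printing Implicit Defensive.

(* The neighbours of a k-set A in F_k(G) are the sets obtained by exchanging
   some a in A for a neighbour b of a outside A, so deg A is the number of
   edges of G leaving A.  For distinct x, y, z, w outside a (k-2)-set S, the
   cuts c(uv) of S + {u, v} satisfy
     c(xz) + c(yw) + 2 (e(x,z) + e(y,w)) = c(yz) + c(xw) + 2 (e(y,z) + e(x,w)),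
   so regularity forces the exchange condition e(x,z) + e(y,w) = e(y,z) + e(x,w)
   on all quadruples of distinct vertices.  If some x, y are distinguished by a
   third vertex, this condition makes x adjacent to and y non-adjacent to every
   other vertex, and then G is a star (centre x) or a co-star (isolated vertex
   y); otherwise all pairs behave alike and G is complete or empty.  Stars and
   co-stars have cuts depending only on whether A contains the centre, and the
   two values agree exactly when n = 2k. *)

Lemma exists_subset_card (T : finType) (D : {set T}) m : m <= #|D| ->
  exists2 A : {set T}, A \subset D & #|A| = m.
Proof.
move=> hm; exists [set x in take m (enum D)].
  by apply/subsetP => x; rewrite inE => /mem_take; rewrite mem_enum.
rewrite cardsE (card_uniqP (take_uniq m (enum_uniq (mem D)))).
by rewrite size_take -cardE; case: ltngtP hm => // ->.
Qed.

Lemma exists_card_set_in (T : finType) (c : T) k : 0 < k <= #|T| ->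
  exists2 A : {set T}, c \in A & #|A| = k.
Proof.
case/andP=> k0 kn; have [S Sc hS] : exists2 S : {set T}, S \subset [set~ c] & #|S| = k.-1.
  by apply: exists_subset_card; rewrite cardsC1; lia.
have cS : c \notin S by apply/negP => /(subsetP Sc); rewrite !inE eqxx.
by exists (c |: S); rewrite ?setU11 // cardsU1 cS hS; lia.
Qed.

Lemma exists_card_set_notin (T : finType) (c : T) k : k < #|T| ->
  exists2 A : {set T}, c \notin A & #|A| = k.
Proof.
move=> kn; have [S Sc hS] : exists2 S : {set T}, S \subset [set~ c] & #|S| = k.
  by apply: exists_subset_card; rewrite cardsC1; lia.
by exists S => //; apply/negP => /(subsetP Sc); rewrite !inE eqxx.
Qed.

Section Swap.
Variable T : finType.
Implicit Types (A B : {set T}) (a b : T).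

Lemma setD_swapl A a b : a \in A -> b \notin A -> A :\: (b |: (A :\ a)) = [set a].
Proof.
move=> aA bA; apply/setP => x; rewrite !inE.
case: (eqVneq x a) => [->|_] /=; last by case: (x \in A); rewrite ?orbT ?andbF.
by rewrite aA andbT orbF; apply: contraNneq bA => <-.
Qed.

Lemma setD_swapr A a b : b \notin A -> (b |: (A :\ a)) :\: A = [set b].
Proof.
move=> bA; apply/setP => x; rewrite !inE.
by case: (eqVneq x b) => [->|_] /=; [rewrite bA | case: (x \in A); rewrite ?andbF].
Qed.

Lemma card_swap A a b : a \in A -> b \notin A -> #|b |: (A :\ a)| = #|A|.
Proof.
move=> aA bA; rewrite cardsU1 [#|A|](cardsD1 a) aA !inE (negbTE bA) andbF.
by rewrite add1n.
Qed.

Lemma swap_of_setD A B a b : A :\: B = [set a] -> B :\: A = [set b] ->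
  B = b |: (A :\ a).
Proof.
move=> /setP HA /setP HB; apply/setP => x; have := HA x; have := HB x; rewrite !inE.
by case: (x \in A); case: (x \in B) => /= <- <-.
Qed.

Lemma swap_symdiff A B a b : #|A| = #|B| ->
  (A :\: B) :|: (B :\: A) = [set a; b] -> a != b ->
  [/\ a \in A, b \notin A & B = b |: (A :\ a)] \/
  [/\ b \in A, a \notin A & B = a |: (A :\ b)].
Proof.
move=> hAB hD ab.
have hI : (A :\: B) :&: (B :\: A) = set0.
  by apply/setP => x; rewrite !inE; case: (x \in A); rewrite ?andbF.
have hX : #|A :\: B| = #|B :\: A| by rewrite !cardsD setIC hAB.
have := cardsUI (A :\: B) (B :\: A); rewrite hI cards0 addn0 hD cards2 ab.
rewrite -hX => hU.
have /cards1P[x hx] : #|A :\: B| == 1 by lia.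
have /cards1P[y hy] : #|B :\: A| == 1 by lia.
have xA : x \in A by move: (set11 x); rewrite -hx inE => /andP[].
have yA : y \notin A by move: (set11 y); rewrite -hy inE => /andP[].
have hxy : [set x; y] = [set a; b] by rewrite -hD hx hy.
have /set2P xab : x \in [set a; b] by rewrite -hxy set21.
have /set2P yab : y \in [set a; b] by rewrite -hxy set22.
have := swap_of_setD hx hy.
case: xab yab xA yA => -> [] -> xA yA eB; first [by rewrite xA in yA | by left | by right].
Qed.
End Swap.

Section TokenDegree.
Variables (T : finType) (e : rel T).
Hypotheses (e_sym : symmetric e) (e_irr : irreflexive e).
Implicit Types (A S : {set T}) (u v : T).

Definition cut_edges (A : {set T}) : {set T * T} :=
  [set p | [&& p.1 \in A, p.2 \notin A & e p.1 p.2]].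

Lemma token_nbrsE k (A : {set T}) : #|A| = k ->
  [set B | token_adj e k A B] = [set p.2 |: (A :\ p.1) | p in cut_edges A].
Proof.
move=> hA; apply/setP => B; rewrite inE /token_adj hA eqxx /=; apply/idP/imsetP.
- case/andP=> /eqP hB /existsP[a /existsP[b /andP[eab /eqP hD]]].
  have ab : a != b by apply: contraTneq eab => ->; rewrite e_irr.
  have [[aA bA ->]|[bA aA ->]] := swap_symdiff (etrans hA (esym hB)) hD ab.
  + by exists (a, b) => //; rewrite inE /= aA bA eab.
  + by exists (b, a) => //; rewrite inE /= aA bA e_sym eab.
- case=> -[a b]; rewrite inE /= => /and3P[aA bA eab] ->.
  rewrite card_swap // hA eqxx /=; apply/existsP; exists a; apply/existsP; exists b.
  by rewrite eab setD_swapl // setD_swapr ?eqxx.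
Qed.

Lemma token_deg_cut k (A : {set T}) : #|A| = k -> token_deg e k A = #|cut_edges A|.
Proof.
move=> hA; rewrite /token_deg token_nbrsE // card_in_imset // => -[a b] [a' b'].
rewrite !inE /= => /and3P[aA bA _] /and3P[a'A b'A _] E.
have := setD_swapl aA bA; rewrite E setD_swapl // => /set1_inj ->.
by have := setD_swapr a bA; rewrite E setD_swapr // => /set1_inj ->.
Qed.

Definition deg_in (S : {set T}) (u : T) : nat := \sum_(v in S) e u v.

Lemma card_cut_edges A : #|cut_edges A| = \sum_(a in A) deg_in (~: A) a.
Proof.
rewrite /deg_in pair_big_dep /= -sum1_card big_mkcond [RHS]big_mkcond /=.
by apply: eq_bigr => -[a b] _; rewrite !inE /=; case: (a \in A); case: (b \in A); case: (e a b).
Qed.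

Lemma deg_inU1 S u v : u \notin S -> deg_in (u |: S) v = e v u + deg_in S v.
Proof. by move=> uS; rewrite /deg_in big_setU1. Qed.

Lemma deg_inCU1 S u v : u \notin S -> deg_in (~: S) v = e v u + deg_in (~: (u |: S)) v.
Proof.
move=> uS; rewrite /deg_in (bigD1 u) ?inE //; congr (_ + _).
by apply: eq_bigl => x; rewrite !inE negb_or andbC.
Qed.

Lemma cut_setU1 S u : u \notin S ->
  #|cut_edges (u |: S)| + deg_in S u = #|cut_edges S| + deg_in (~: S) u.
Proof.
move=> uS; rewrite !card_cut_edges big_setU1 //= (deg_inCU1 u uS) e_irr add0n.
rewrite [in RHS](eq_bigr _ (fun a _ => deg_inCU1 a uS)) big_split /=.
have -> : deg_in S u = \sum_(a in S) e a u by apply: eq_bigr => a _; rewrite e_sym.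
lia.
Qed.

Lemma cut_setU2 S u v : u != v -> u \notin S -> v \notin S ->
  #|cut_edges (u |: (v |: S))| + 2 * e u v + deg_in S u + deg_in S v =
  #|cut_edges S| + deg_in (~: S) u + deg_in (~: S) v.
Proof.
move=> uv uS vS; have uvS : u \notin v |: S by rewrite !inE negb_or uv.
have := cut_setU1 uvS; have := cut_setU1 vS.
rewrite (deg_inU1 u vS) (deg_inCU1 u vS); lia.
Qed.

Lemma cut_exchange S x y z w :
  x != y -> x != z -> x != w -> y != z -> y != w -> z != w ->
  x \notin S -> y \notin S -> z \notin S -> w \notin S ->
  #|cut_edges (x |: (z |: S))| + #|cut_edges (y |: (w |: S))| + 2 * (e x z + e y w) =
  #|cut_edges (y |: (z |: S))| + #|cut_edges (x |: (w |: S))| + 2 * (e y z + e x w).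
Proof.
move=> xy xz xw yz yw zw xS yS zS wS.
have := cut_setU2 xz xS zS; have := cut_setU2 yw yS wS.
have := cut_setU2 yz yS zS; have := cut_setU2 xw xS wS.
clear; lia.
Qed.
End TokenDegree.

Definition star_at (T : finType) (c : T) : rel T :=
  fun a b => (a != b) && ((a == c) || (b == c)).
Definition costar_at (T : finType) (c : T) : rel T :=
  fun a b => (a != b) && ~~ ((a == c) || (b == c)).

Section SpecialCuts.
Variables (T : finType) (e : rel T).
Implicit Types (A P Q : {set T}) (c : T).

Lemma cut_edges_setX A P Q :
  {in A & ~: A, forall a b, e a b = (a \in P) && (b \in Q)} ->
  cut_edges e A = setX (A :&: P) (~: A :&: Q).
Proof.
move=> he; apply/setP => -[a b]; rewrite !inE /=.
by case aA: (a \in A); case bA: (b \in A); rewrite /= ?andbF // he // inE bA.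
Qed.

Lemma card_cut_edges_complete A : e =2 (fun a b => a != b) ->
  #|cut_edges e A| = #|A| * #|~: A|.
Proof.
move=> he; rewrite (@cut_edges_setX _ setT setT) ?setIT ?cardsX // => a b aA.
by rewrite he !inE => /memPn ->.
Qed.

Lemma card_cut_edges_empty A : e =2 (fun _ _ => false) -> #|cut_edges e A| = 0.
Proof.
move=> he; rewrite (@cut_edges_setX _ set0 set0) ?setI0 ?cardsX ?cards0 //.
by move=> a b _ _; rewrite he inE.
Qed.

Lemma card_cut_edges_star A c : e =2 star_at c ->
  #|cut_edges e A| = if c \in A then #|~: A| else #|A|.
Proof.
move=> he; case: (boolP (c \in A)) => cA.
- rewrite (@cut_edges_setX _ [set c] setT) ?cardsX.
  + by rewrite setIT (setIidPr _) ?sub1set // cards1 mul1n.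
  + move=> a b aA; rewrite in_setC => bA; rewrite he /star_at !inE (memPn bA _ aA) /=.
    by rewrite andbT [b == c]eq_sym (negbTE (memPn bA _ cA)) orbF.
- rewrite (@cut_edges_setX _ setT [set c]) ?cardsX.
  + by rewrite setIT (setIidPr _) ?sub1set ?inE ?cA // cards1 muln1.
  + move=> a b aA; rewrite in_setC => bA; rewrite he /star_at !inE (memPn bA _ aA) /=.
    by rewrite (negbTE (memPn cA _ aA)).
Qed.

Lemma card_cut_edges_costar A c : e =2 costar_at c ->
  #|cut_edges e A| = #|A :\ c| * #|~: A :\ c|.
Proof.
move=> he; rewrite (@cut_edges_setX _ (~: [set c]) (~: [set c])) ?cardsX -?setDE //.
by move=> a b aA; rewrite in_setC => bA; rewrite he /costar_at !inE negb_or (memPn bA _ aA).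
Qed.
End SpecialCuts.

Definition exchange_condition (T : finType) (e : rel T) : Prop :=
  forall x y z w : T, x != y -> x != z -> x != w -> y != z -> y != w -> z != w ->
  e x z + e y w = e y z + e x w.

Section Regularity.
Variables (T : finType) (e : rel T) (k : nat).
Implicit Type A : {set T}.

Definition cut_regular : Prop :=
  exists d, forall A : {set T}, #|A| = k -> #|cut_edges e A| = d.

Lemma token_regular_cut : symmetric e -> irreflexive e ->
  token_regular e k <-> cut_regular.
Proof.
move=> e_sym e_irr; split=> -[d hd]; exists d => A hA.
- by rewrite -(token_deg_cut e_sym e_irr hA) hd.
- by rewrite (token_deg_cut e_sym e_irr hA) hd.
Qed.

Lemma cut_regular_split (c : T) (u v : nat) : 0 < k < #|T| ->
  (forall A, #|A| = k -> #|cut_edges e A| = if c \in A then u else v) ->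
  cut_regular <-> u = v.
Proof.
move=> hk hcut; split=> [[d hd] | uv]; last by exists u => A /hcut ->; rewrite -uv if_same.
have [A cA hA] : exists2 A : {set T}, c \in A & #|A| = k by apply: exists_card_set_in; lia.
have [B cB hB] : exists2 B : {set T}, c \notin B & #|B| = k by apply: exists_card_set_notin; lia.
by have := hd A hA; have := hd B hB; rewrite !hcut // cA (negbTE cB) => -> ->.
Qed.

Lemma cut_regular_star c : e =2 star_at c -> 0 < k < #|T| ->
  cut_regular <-> #|T| = 2 * k.
Proof.
move=> he hk; rewrite (@cut_regular_split c (#|T| - k) k hk) => [|A hA].
  by split; lia.
by rewrite (card_cut_edges_star A he) (cardsCs (~: A)) setCK hA.
Qed.

Lemma cut_regular_costar c : e =2 costar_at c -> 0 < k < #|T| ->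
  cut_regular <-> #|T| = 2 * k.
Proof.
move=> he hk; rewrite (@cut_regular_split c ((k - 1) * (#|T| - k)) (k * (#|T| - k - 1)) hk).
  by split; nia.
move=> A hA; rewrite (card_cut_edges_costar A he).
have hC : #|~: A| = #|T| - k by rewrite (cardsCs (~: A)) setCK hA.
have dA := cardsD1 c A; have dC := cardsD1 c (~: A); rewrite inE in dC.
case: (boolP (c \in A)) => cA /= in dA dC *.
- have -> : #|A :\ c| = k - 1 by lia.
  by have -> : #|~: A :\ c| = #|T| - k by lia.
- have -> : #|A :\ c| = k by lia.
  by have -> : #|~: A :\ c| = #|T| - k - 1 by lia.
Qed.

Lemma cut_regular_complete : e =2 (fun a b => a != b) -> cut_regular.
Proof.
move=> he; exists (k * (#|T| - k)) => A hA.
by rewrite (card_cut_edges_complete A he) (cardsCs (~: A)) setCK hA.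
Qed.

Lemma cut_regular_empty : e =2 (fun _ _ => false) -> cut_regular.
Proof. by move=> he; exists 0 => A _; exact: card_cut_edges_empty. Qed.

Lemma cut_regular_exchange : symmetric e -> irreflexive e ->
  2 <= k -> k + 2 <= #|T| -> cut_regular -> exchange_condition e.
Proof.
move=> e_sym e_irr k2 kn [d hd] x y z w.
have [S SX hS] : exists2 S : {set T}, S \subset ~: (x |: (y |: (z |: [set w]))) & #|S| = k - 2.
  apply: exists_subset_card; rewrite (cardsCs (~: _)) setCK.
  have : #|x |: (y |: (z |: [set w]))| <= 4.
    by rewrite !cardsU1 cards1; case: (_ \notin _); case: (_ \notin _); case: (_ \notin _).
  lia.
have hk u v : u \notin S -> v \notin S -> u != v -> #|u |: (v |: S)| = k.
  by move=> uS vS uv; rewrite !cardsU1 !inE negb_or uv uS vS hS /= addnA subnKC.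
have [xS yS zS wS] : [/\ x \notin S, y \notin S, z \notin S & w \notin S].
  by split; apply/negP => /(subsetP SX); rewrite !inE eqxx ?orbT.
move=> xy xz xw yz yw zw.
have := cut_exchange e_sym e_irr xy xz xw yz yw zw xS yS zS wS.
by rewrite !hd ?hk // -!addnA => /addnI/addnI/eqP; rewrite eqn_pmul2l // => /eqP.
Qed.
End Regularity.

Section Classification.
Variables (T : finType) (e : rel T).
Hypotheses (e_sym : symmetric e) (e_irr : irreflexive e).

Lemma eq_star_at c : (forall a, c != a -> e c a) ->
  (forall a b, c != a -> c != b -> ~~ e a b) -> e =2 star_at c.
Proof.
move=> ec eo a b; rewrite /star_at; case: (eqVneq a b) => [->|ab]; first by rewrite e_irr.
case: (eqVneq c a) ab => [<-|ca] ab; first by rewrite ec.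
case: (eqVneq c b) ab => [<-|cb] ab; first by rewrite orbT e_sym ec.
by rewrite (negbTE (eo a b ca cb)).
Qed.

Lemma eq_costar_at c : (forall a, ~~ e c a) ->
  (forall a b, c != a -> c != b -> a != b -> e a b) -> e =2 costar_at c.
Proof.
move=> ec eo a b; rewrite /costar_at; case: (eqVneq a b) => [->|ab]; first by rewrite e_irr.
case: (eqVneq c a) => [<-|ca]; first by rewrite (negbTE (ec b)).
case: (eqVneq c b) => [<-|cb]; first by rewrite e_sym (negbTE (ec a)).
by rewrite eo.
Qed.

Lemma eq_complete_or_empty : (forall x y v, x != y -> x != v -> y != v -> e x v = e y v) ->
  e =2 (fun a b => a != b) \/ e =2 (fun _ _ => false).
Proof.
move=> twin.
have move_end a b c : b != a -> b != c -> e a b = e c b.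
  by move=> ba bc; case: (eqVneq a c) => [->//|ac]; apply: twin; rewrite // eq_sym.
have same a b c d : a != b -> c != d -> e a b = e c d.
  move=> ab cd; have ba : b != a by rewrite eq_sym.
  case: (eqVneq c b) cd => [-> | cb] cd.
    by rewrite (move_end a b d ba cd) e_sym.
  have bc : b != c by rewrite eq_sym.
  by rewrite (move_end a b c ba bc) e_sym (move_end b c d cb cd) e_sym.
case: (boolP [exists a, exists b, e a b]) => [/existsP[a /existsP[b eab]] | noedge].
- have ab : a != b by apply: contraTneq eab => ->; rewrite e_irr.
  left=> x y; case: (eqVneq x y) => [->|xy]; first by rewrite e_irr.
  by rewrite (same x y a b xy ab).
- right=> x y; apply/negP => exy; move/negP: noedge; apply.
  by apply/existsP; exists x; apply/existsP; exists y.
Qed.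

Hypothesis e_ex : exchange_condition e.

Lemma exchange_separates x y v : x != y -> x != v -> y != v -> e x v -> ~~ e y v ->
  forall w, x != w -> y != w -> e x w && ~~ e y w.
Proof.
move=> xy xv yv exv eyv w xw yw; case: (eqVneq v w) => [<-|vw]; first by rewrite exv.
have := e_ex xy xv xw yv yw vw; rewrite exv (negbTE eyv).
by case: (e x w); case: (e y w).
Qed.

Lemma exchange_rest x y : x != y -> (forall w, x != w -> y != w -> e x w && ~~ e y w) ->
  forall z w, x != z -> y != z -> x != w -> y != w -> z != w -> e z w = ~~ e x y.
Proof.
move=> xy sep z w xz yz xw yw zw.
have [zy zx yx] : [/\ z != y, z != x & y != x] by split; rewrite eq_sym.
have := e_ex zy zx zw yx yw xw; rewrite (e_sym z) (e_sym y x).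
case/andP: (sep z xz yz) => -> _; case/andP: (sep w xw yw) => _ /negbTE ->.
by case: (e x y); case: (e z w).
Qed.

Lemma separated_star_or_costar x y : x != y ->
  (forall w, x != w -> y != w -> e x w && ~~ e y w) ->
  (exists c, e =2 star_at c) \/ (exists c, e =2 costar_at c).
Proof.
move=> xy sep; have rest := exchange_rest xy sep.
have sepx w (xw : x != w) (yw : y != w) : e x w by case/andP: (sep w xw yw).
have sepy w (xw : x != w) (yw : y != w) : ~~ e y w by case/andP: (sep w xw yw).
case exy: (e x y); [left; exists x | right; exists y].
- apply: eq_star_at => [a xa | a b xa xb].
    by case: (eqVneq y a) => [<-|ya]; [rewrite exy | apply: sepx].
  case: (eqVneq a b) => [->|ab]; first by rewrite e_irr.
  case: (eqVneq y a) ab => [<-|ya] ab; first exact: sepy.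
  case: (eqVneq y b) ab => [<-|yb] ab; first by rewrite e_sym sepy.
  by rewrite rest ?exy.
- apply: eq_costar_at => [a | a b ya yb ab].
    case: (eqVneq x a) => [<-|xa]; first by rewrite e_sym exy.
    by case: (eqVneq y a) => [<-|ya]; [rewrite e_irr | apply: sepy].
  case: (eqVneq x a) ab => [<-|xa] ab; first exact: sepx.
  case: (eqVneq x b) ab => [<-|xb] ab; first by rewrite e_sym sepx.
  by rewrite rest ?exy.
Qed.

Lemma exchange_classification :
  [\/ e =2 (fun a b => a != b), e =2 (fun _ _ => false),
      exists c, e =2 star_at c | exists c, e =2 costar_at c].
Proof.
case: (boolP [exists x, exists y, exists v, [&& x != y, x != v, y != v & e x v != e y v]]).
- case/existsP=> x /existsP[y /existsP[v /and4P[xy xv yv hne]]].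
  have [x' [y' [x'y' x'v y'v ex'v ey'v]]] :
      exists x' y', [/\ x' != y', x' != v, y' != v, e x' v & ~~ e y' v].
    move: hne; case exv: (e x v); case eyv: (e y v) => // _; [exists x, y | exists y, x].
      by rewrite eyv.
    by rewrite exv eq_sym.
  by case: (separated_star_or_costar x'y' (exchange_separates x'y' x'v y'v ex'v ey'v)) => -[c hc];
    [constructor 3 | constructor 4]; exists c.
- move=> /existsPn notwin.
  have twin x y v : x != y -> x != v -> y != v -> e x v = e y v.
    move=> xy xv yv; move/existsPn/(_ y)/existsPn/(_ v): (notwin x).
    by rewrite xy xv yv negbK => /eqP.
  by case: (eq_complete_or_empty twin) => he; [constructor 1 | constructor 2].
Qed.
End Classification.

Section Isomorphism.
Variables (T : finType) (e : rel T).

Lemma graph_iso_completeE : graph_iso e (complete_rel #|T|) <-> e =2 (fun a b => a != b).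
Proof.
split=> [[f [fb he]] a b | he]; first by rewrite he /complete_rel (bij_eq fb).
exists enum_rank; split=> [|a b]; first exact: enum_rank_bij.
by rewrite he /complete_rel (bij_eq (@enum_rank_bij T)).
Qed.

Lemma graph_iso_emptyE : graph_iso e (empty_rel #|T|) <-> e =2 (fun _ _ => false).
Proof.
split=> [[f [_ he]] a b | he]; first by rewrite he.
by exists enum_rank; split=> [|a b]; [exact: enum_rank_bij | rewrite he].
Qed.

Lemma exists_labelling_at (n0 : 0 < #|T|) (c : T) :
  exists2 f : T -> 'I_#|T|, bijective f & forall x, (val (f x) == 0) = (x == c).
Proof.
pose i0 := Ordinal n0; pose f := tperm (enum_rank c) i0 \o enum_rank.
have fb : bijective f := bij_comp (inv_bij (tpermK _ _)) (@enum_rank_bij T).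
exists f => // x; rewrite -[0]/(val i0) val_eqE -[i0](tpermL (enum_rank c)).
exact: (bij_eq fb).
Qed.

Lemma graph_iso_centered (h : bool -> bool -> bool) : 0 < #|T| ->
  graph_iso e (fun i j : 'I_#|T| => (i != j) && h (val i == 0) (val j == 0)) <->
  exists c, e =2 (fun a b => (a != b) && h (a == c) (b == c)).
Proof.
move=> n0; split=> [[f [[g fg gf] he]] | [c he]].
- pose i0 := Ordinal n0.
  have f0 x : (val (f x) == 0) = (x == g i0).
    by rewrite -[0]/(val i0) val_eqE -{1}[i0]gf (can_eq fg).
  by exists (g i0) => a b; rewrite he (can_eq fg) !f0.
- have [f fb f0] := exists_labelling_at n0 c.
  by exists f; split=> // a b; rewrite he (bij_eq fb) !f0.
Qed.
End Isomorphism.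

Theorem theorem1 (T : finType) (e : rel T) (k : nat)
  (e_sym : symmetric e) (e_irr : irreflexive e)
  (hk2 : 2 <= k) (hkn : k <= #|T| - 2) :
  token_regular e k <->
  [\/ graph_iso e (complete_rel #|T|),
      graph_iso e (empty_rel #|T|),
      graph_iso e (star_rel #|T|) /\ #|T| = 2 * k
    | graph_iso e (costar_rel #|T|) /\ #|T| = 2 * k].
Proof.
have n0 : 0 < #|T| by lia.
have hk : 0 < k < #|T| by lia.
have starE : graph_iso e (star_rel #|T|) <-> exists c, e =2 star_at c :=
  graph_iso_centered e orb n0.
have costarE : graph_iso e (costar_rel #|T|) <-> exists c, e =2 costar_at c :=
  graph_iso_centered e (fun p q => ~~ (p || q)) n0.
rewrite (token_regular_cut k e_sym e_irr); split=> [reg | ].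
- have ex : exchange_condition e by apply: (cut_regular_exchange e_sym e_irr hk2 _ reg); lia.
  case: (exchange_classification e_sym e_irr ex) => [he | he | [c he] | [c he]].
  + by constructor 1; apply/graph_iso_completeE.
  + by constructor 2; apply/graph_iso_emptyE.
  + by constructor 3; split; [apply/starE; exists c | apply/(cut_regular_star he hk)].
  + by constructor 4; split; [apply/costarE; exists c | apply/(cut_regular_costar he hk)].
- case=> [/graph_iso_completeE he | /graph_iso_emptyE he | [/starE[c he] n2k] | [/costarE[c he] n2k]].
  + exact: cut_regular_complete.
  + exact: cut_regular_empty.
  + exact/(cut_regular_star he hk).
  + exact/(cut_regular_costar he hk).
Qed.
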